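(* There are universal constants $c_0>0$ and $K_3>0$ such that for all $\alpha_m>0$, $\theta\in(0,1)$ and $h,\alpha_s,\eta>0$ satisfying \[ l_1:=\frac{h}{\eta^{1/3}\alpha_s^{1/3}}<c_0(1-\theta)^{2/3}\theta^{2/3}, \] one has \[ E^{1D}_{h,\alpha_s,\eta,\theta}\le K_3\frac{\theta^{4/3}}{(1-\theta)^{2/3}}\alpha_s^{2/3}\eta^{5/3}h . \] This bound is attained by a periodic pattern of bonded intervals (of length $\theta l$, with $u=0$ and $w$ affine of slope $\eta$) alternating with blisters (of length $(1-\theta)l$, on which $w_x+\frac12u_x^2-\eta=0$), with period $l\sim l_1/((1-\theta)^{2/3}\theta^{2/3})$.
   Context: Let $\mathbb T^1=\mathbb R/\mathbb Z$. Fix parameters $\alpha_m>0$, $h>0$, $\alpha_s>0$, $\eta>0$ and $\theta\in(0,1)$. The admissible class $\mathcal A^{1D}$ consists of triples $(w,u,\Omega)$ with $w\in H^1(\mathbb T^1;\mathbb R)$, $u\in H^2(\mathbb T^1;[0,\infty))$, $\Omega\subset\mathbb T^1$ closed with Lebesgue measure $|\Omega|=\theta$, and $u=0$ on $\Omega$. The energy is \[ E^{1D}[w,u,\Omega]=\alpha_m h\int_0^1\Big|w_x+\tfrac12 u_x^2-\eta\Big|^2dx+h^3\int_0^1|u_{xx}|^2dx+\alpha_s\Big(\int_\Omega|w_x|^2dx\Big)^{1/2}\Big(\int_\Omega|w|^2dx\Big)^{1/2}, \] and $E^{1D}_{h,\alpha_s,\eta,\theta}:=\inf_{(w,u,\Omega)\in\mathcal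 A^{1D}}E^{1D}[w,u,\Omega]$. *)

From Stdlib Require Import Reals Rtopology ClassicalEpsilon.
Open Scope R_scope.

(* 1-periodic functions / sets on R, i.e. functions / sets on T^1 = R/Z. *)
Definition periodic1 (f : R -> R) : Prop := forall x, f (x + 1) = f x.
Definition periodic1_set (Om : R -> Prop) : Prop := forall x, Om (x + 1) <-> Om x.

Definition indic (Om : R -> Prop) (x : R) : R :=
  if excluded_middle_informative (Om x) then 1 else 0.

Definition RInt01 (f : R -> R) (I : R) : Prop :=
  exists pr : Riemann_integrable f 0 1, RiemannInt pr = I.

(* Admissible triples (w,u,Omega), in the regular subclass used here:
   w 1-periodic, differentiable everywhere with derivative w' whose square is
   Riemann integrable (so w in H^1(T^1));
   u 1-periodic, twice differentiable everywhere (u', u''), u'' Riemann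
   integrable (with u''^2 integrable, see energy), so u in H^2(T^1), u >= 0;
   Omega a closed 1-periodic set, Jordan measurable with |Omega cap [0,1]| = theta,
   and u = 0 on Omega. *)
Definition admissible1D (theta : R) (w w' u u' u'' : R -> R) (Om : R -> Prop) : Prop :=
  periodic1 w /\ periodic1 u /\ periodic1_set Om /\ closed_set Om /\
  (forall x, derivable_pt_lim w x (w' x)) /\
  (forall x, derivable_pt_lim u x (u' x)) /\
  (forall x, derivable_pt_lim u' x (u'' x)) /\
  inhabited (Riemann_integrable (fun x => (w' x) ^ 2) 0 1) /\
  (forall x, 0 <= u x) /\
  (forall x, Om x -> u x = 0) /\
  RInt01 (indic Om) theta.

Definition E1D_value (alpha_m h alpha_s eta : R) (w w' u u' u'' : R -> R)
    (Om : R -> Prop) (E : R) : Prop :=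
  exists Im Ib Iwx Iw : R,
    RInt01 (fun x => (w' x + / 2 * (u' x) ^ 2 - eta) ^ 2) Im /\
    RInt01 (fun x => (u'' x) ^ 2) Ib /\
    RInt01 (fun x => indic Om x * (w' x) ^ 2) Iwx /\
    RInt01 (fun x => indic Om x * (w x) ^ 2) Iw /\
    E = alpha_m * h * Im + h ^ 3 * Ib + alpha_s * (sqrt Iwx * sqrt Iw).

(* "E^{1D}_{h,alpha_s,eta,theta} <= B": for every eps > 0 some admissible
   configuration has energy <= B + eps. *)
Definition E1D_inf_le (alpha_m h alpha_s eta theta B : R) : Prop :=
  forall eps, 0 < eps ->
    exists (w w' u u' u'' : R -> R) (Om : R -> Prop) (E : R),
      admissible1D theta w w' u u' u'' Om /\
      E1D_value alpha_m h alpha_s eta w w' u u' u'' Om E /\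
      E <= B + eps.

(* Idea (following the paper): build a unit-period profile (W, U) made of a
   bonded interval [0, th] on which U = 0 and W is affine with slope 1, and a
   blister (th, 1) on which U is a polynomial bump t^3 (1-t)^3 and
   W' = 1 - (U')^2/2, so that the membrane strain vanishes identically. The
   bump amplitude is fixed so that W returns to its initial value after one
   period.  Packing N rescaled copies into T^1, with w = (eta/N) W(N x) and
   u = (sqrt eta / N) U(N x), gives an admissible configuration of energy
   h^3 eta N^2 88/(1-th)^2 (bending) plus a sheath term <= alpha_s eta^2 th^2/N.
   Choosing N between X and 2X, with X = ((1-th) th)^(2/3) (eta alpha_s)^(1/3)/h
   (so X > 1 is exactly the smallness of l1 with c0 = 1), balances the two
   terms and yields the bound with K3 = 353. *)

From Stdlib Require Import Reals Rtopology ClassicalEpsilon.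
From Stdlib Require Import Lra ZArith.
From Coquelicot Require Import Coquelicot.
Open Scope R_scope.

Lemma Rmin_pos_bounds a b :
  0 < a -> 0 < b -> 0 < Rmin a b /\ Rmin a b <= a /\ Rmin a b <= b.
Proof. intros Ha Hb. split; [apply Rmin_pos; auto|split; [apply Rmin_l|apply Rmin_r]]. Qed.

Lemma derivable_pt_lim_two_sided (F g h : R -> R) x L d :
  0 < d ->
  (forall y, x - d < y < x -> F y = g y) ->
  (forall y, x < y < x + d -> F y = h y) ->
  F x = g x -> F x = h x ->
  derivable_pt_lim g x L -> derivable_pt_lim h x L ->
  derivable_pt_lim F x L.
Proof.
  intros Hd Hl Hr Hg Hh Dg Dh eps Heps.
  destruct (Dg eps Heps) as [dg Hdg]; destruct (Dh eps Heps) as [dh Hdh].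
  pose proof (Rmin_pos_bounds dg dh (cond_pos dg) (cond_pos dh)) as (Hm & H3 & H4).
  pose proof (Rmin_pos_bounds d _ Hd Hm) as (Hm' & H1 & H2).
  exists (mkposreal _ Hm'); intros y Hy0 Hy; simpl in Hy.
  apply Rabs_def2 in Hy.
  destruct (Rlt_or_le y 0) as [Hneg|Hpos].
  - rewrite Hl, Hg by lra. apply Hdg; auto. apply Rabs_def1; lra.
  - assert (0 < y) by (destruct Hpos; auto; congruence).
    rewrite Hr, Hh by lra. apply Hdh; auto. apply Rabs_def1; lra.
Qed.

Lemma derivable_pt_lim_local (F G : R -> R) x L d :
  0 < d -> (forall y, x - d < y < x + d -> F y = G y) ->
  derivable_pt_lim G x L -> derivable_pt_lim F x L.
Proof.
  intros Hd HFG DG.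
  apply (derivable_pt_lim_two_sided F G G x L d Hd); auto; intros; apply HFG; lra.
Qed.

Lemma derivable_pt_lim_affine (F F' : R -> R) a b x :
  (forall s, derivable_pt_lim F s (F' s)) ->
  derivable_pt_lim (fun y => F (a * y + b)) x (a * F' (a * x + b)).
Proof.
  intros HF.
  assert (D : derivable_pt_lim (fun y => a * y + b) x a).
  { apply is_derive_Reals. auto_derive; auto. ring. }
  rewrite Rmult_comm. exact (derivable_pt_lim_comp _ F x _ _ D (HF (a * x + b))).
Qed.

Lemma derivable_pt_lim_translate (F F' : R -> R) c x :
  (forall s, derivable_pt_lim F s (F' s)) ->
  derivable_pt_lim (fun y => F (y - c)) x (F' (x - c)).
Proof.
  intros HF. assert (H := derivable_pt_lim_affine F F' 1 (- c) x HF).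
  replace (1 * x + - c) with (x - c) in H by ring. rewrite Rmult_1_l in H.
  eapply derivable_pt_lim_ext; [|exact H]. intros y. cbv beta. f_equal. ring.
Qed.

Lemma derivable_pt_lim_eq f x l l' :
  derivable_pt_lim f x l -> l = l' -> derivable_pt_lim f x l'.
Proof. intros H E; subst; auto. Qed.

Lemma periodic1_nat (F : R -> R) : periodic1 F -> forall m s, F (s + INR m) = F s.
Proof.
  intros HF m. induction m as [|m IH]; intros s.
  - simpl. f_equal. ring.
  - rewrite S_INR. replace (s + (INR m + 1)) with ((s + INR m) + 1) by ring.
    rewrite HF. apply IH.
Qed.

Lemma is_RInt_periodic_translate (F : R -> R) (I : R) m :
  periodic1 F -> is_RInt F 0 1 I -> is_RInt F (INR m) (INR m + 1) I.
Proof.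
  intros HF H.
  assert (H' : is_RInt F (1 * INR m + - INR m) (1 * (INR m + 1) + - INR m) I).
  { replace (1 * INR m + - INR m) with 0 by ring.
    replace (1 * (INR m + 1) + - INR m) with 1 by ring. exact H. }
  apply is_RInt_comp_lin in H'.
  eapply is_RInt_ext; [|exact H']. intros x _.
  change (1 * F (1 * x + - INR m) = F x).
  rewrite Rmult_1_l, <- (periodic1_nat F HF m). f_equal. ring.
Qed.

Lemma is_RInt_periods (F : R -> R) (I : R) m :
  periodic1 F -> is_RInt F 0 1 I -> is_RInt F 0 (INR m) (INR m * I).
Proof.
  intros HF H. induction m as [|m IH].
  - simpl. rewrite Rmult_0_l. apply (@is_RInt_point R_NormedModule).
  - rewrite S_INR, Rmult_plus_distr_r, Rmult_1_l.
    apply (@is_RInt_Chasles R_NormedModule F 0 (INR m)); auto.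
    apply is_RInt_periodic_translate; auto.
Qed.

Lemma is_RInt_periodic_rescale (F : R -> R) (I : R) (N : nat) :
  periodic1 F -> is_RInt F 0 1 I -> (1 <= N)%nat ->
  is_RInt (fun x => F (INR N * x)) 0 1 I.
Proof.
  intros HF HI HN. assert (HNpos : 1 <= INR N) by (apply (le_INR 1); auto).
  assert (H : is_RInt F (INR N * 0 + 0) (INR N * 1 + 0) (INR N * I)).
  { replace (INR N * 0 + 0) with 0 by ring. replace (INR N * 1 + 0) with (INR N) by ring.
    apply is_RInt_periods; auto. }
  apply is_RInt_comp_lin, (is_RInt_scal _ _ _ (/ INR N)) in H.
  change (is_RInt (fun y => / INR N * (INR N * F (INR N * y + 0))) 0 1
                  (/ INR N * (INR N * I))) in H.
  replace (/ INR N * (INR N * I)) with I in H by (field; lra).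
  eapply is_RInt_ext; [|exact H]. intros x _. cbv beta.
  rewrite Rplus_0_r, <- Rmult_assoc, Rinv_l, Rmult_1_l by lra. reflexivity.
Qed.

Lemma is_RInt_unit_split (F A B : R -> R) (th I1 I2 : R) : 0 < th < 1 ->
  (forall s, 0 < s < th -> F s = A s) ->
  (forall s, th < s < 1 -> F s = B s) ->
  is_RInt A 0 th I1 -> is_RInt B th 1 I2 -> is_RInt F 0 1 (I1 + I2).
Proof.
  intros Hth HA HB H1 H2. change (I1 + I2) with (plus I1 I2).
  apply (@is_RInt_Chasles R_NormedModule F _ th).
  - eapply is_RInt_ext; [|exact H1]. intros x Hx.
    rewrite Rmin_left, Rmax_right in Hx by lra. symmetry. apply HA. lra.
  - eapply is_RInt_ext; [|exact H2]. intros x Hx.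
    rewrite Rmin_left, Rmax_right in Hx by lra. symmetry. apply HB. lra.
Qed.

Lemma is_RInt_const_R a b (v : R) : is_RInt (fun _ => v) a b ((b - a) * v).
Proof. apply (@is_RInt_const R_NormedModule). Qed.

Lemma is_RInt_scale_R (G f : R -> R) k I :
  is_RInt G 0 1 I -> (forall x, f x = k * G x) -> is_RInt f 0 1 (k * I).
Proof.
  intros H E. apply (is_RInt_scal _ _ _ k) in H.
  eapply is_RInt_ext; [|exact H]. intros x _. symmetry. apply E.
Qed.

Lemma is_RInt_RInt01 f I : is_RInt f 0 1 I -> RInt01 f I.
Proof.
  intros H. exists (ex_RInt_Reals_0 _ _ _ (ex_intro _ I H)).
  rewrite <- RInt_Reals. apply (@is_RInt_unique R_CompleteNormedModule); auto.
Qed.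

Lemma Int_part_cell y : IZR (Int_part y) <= y < IZR (Int_part y) + 1.
Proof. destruct (base_Int_part y). lra. Qed.

Lemma frac_part_cell (n : Z) y : IZR n <= y < IZR n + 1 -> frac_part y = y - IZR n.
Proof.
  intros H. symmetry. apply (Int_part_frac_part_spec y n (y - IZR n)); [lra|ring].
Qed.

Lemma frac_part_periodic : periodic1 frac_part.
Proof.
  intros s. rewrite (frac_part_cell (Int_part s + 1)).
  - unfold frac_part. rewrite plus_IZR. ring.
  - rewrite plus_IZR. assert (H := Int_part_cell s). lra.
Qed.

Definition periodize (th : R) (f g : R -> R) (s : R) : R :=
  if Rle_dec (frac_part s) th then f (frac_part s) else g (frac_part s).

Lemma periodize_periodic th f g : periodic1 (periodize th f g).
Proof. intros s. unfold periodize. rewrite frac_part_periodic. reflexivity. Qed.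

Lemma periodize_bonded th f g (n : Z) y : th < 1 ->
  IZR n <= y <= IZR n + th -> periodize th f g y = f (y - IZR n).
Proof.
  intros Hth Hy. unfold periodize. rewrite (frac_part_cell n y) by lra.
  destruct Rle_dec as [_|Hn]; [reflexivity|exfalso; apply Hn; lra].
Qed.

Lemma periodize_blister th f g (n : Z) y : 0 <= th ->
  IZR n + th < y < IZR n + 1 -> periodize th f g y = g (y - IZR n).
Proof.
  intros Hth Hy. unfold periodize. rewrite (frac_part_cell n y) by lra.
  destruct Rle_dec; [lra|reflexivity].
Qed.

Lemma periodize_unit_bonded th f g s : th < 1 -> 0 <= s <= th ->
  periodize th f g s = f s.
Proof.
  intros Hth Hs. rewrite (periodize_bonded th f g 0) by (simpl; lra).
  f_equal. simpl. ring.
Qed.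

Lemma periodize_unit_blister th f g s : 0 <= th -> th < s < 1 ->
  periodize th f g s = g s.
Proof.
  intros Hth Hs. rewrite (periodize_blister th f g 0) by (simpl; lra).
  f_equal. simpl. ring.
Qed.

Section PeriodizeDerivative.
Variables (th : R) (f f' g g' : R -> R).
Hypothesis th_range : 0 < th < 1.
Hypothesis f_deriv : forall s, derivable_pt_lim f s (f' s).
Hypothesis g_deriv : forall s, derivable_pt_lim g s (g' s).

Lemma derivable_periodize_inside (n : Z) s :
  IZR n < s < IZR n + th \/ IZR n + th < s < IZR n + 1 ->
  derivable_pt_lim (periodize th f g) s (periodize th f' g' s).
Proof.
  intros [Hs|Hs].
  - pose proof (Rmin_pos_bounds (s - IZR n) (IZR n + th - s) ltac:(lra) ltac:(lra))
      as (Hd & Hd1 & Hd2).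
    set (d := Rmin (s - IZR n) (IZR n + th - s)) in *.
    rewrite (periodize_bonded th f' g' n) by lra.
    apply (derivable_pt_lim_local _ (fun y => f (y - IZR n)) _ _ d Hd).
    + intros y Hy. apply periodize_bonded; lra.
    + apply derivable_pt_lim_translate; auto.
  - pose proof (Rmin_pos_bounds (s - IZR n - th) (IZR n + 1 - s) ltac:(lra) ltac:(lra))
      as (Hd & Hd1 & Hd2).
    set (d := Rmin (s - IZR n - th) (IZR n + 1 - s)) in *.
    rewrite (periodize_blister th f' g' n) by lra.
    apply (derivable_pt_lim_local _ (fun y => g (y - IZR n)) _ _ d Hd).
    + intros y Hy. apply periodize_blister; lra.
    + apply derivable_pt_lim_translate; auto.
Qed.

Hypothesis edge_value : f th = g th.
Hypothesis edge_slope : f' th = g' th.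

Lemma derivable_periodize_edge (n : Z) :
  derivable_pt_lim (periodize th f g) (IZR n + th) (periodize th f' g' (IZR n + th)).
Proof.
  set (s := IZR n + th).
  pose proof (Rmin_pos_bounds th (1 - th) ltac:(lra) ltac:(lra)) as (Hd & Hd1 & Hd2).
  set (d := Rmin th (1 - th)) in *.
  assert (Es : s - IZR n = th) by (unfold s; ring).
  rewrite (periodize_bonded th f' g' n) by (unfold s; lra).
  apply (derivable_pt_lim_two_sided _ (fun y => f (y - IZR n)) (fun y => g (y - IZR n))
           _ _ d Hd).
  - intros y Hy. apply periodize_bonded; unfold s in Hy; lra.
  - intros y Hy. apply periodize_blister; unfold s in Hy; lra.
  - apply periodize_bonded; unfold s; lra.
  - rewrite (periodize_bonded th f g n) by (unfold s; lra). rewrite Es. exact edge_value.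
  - apply derivable_pt_lim_translate; auto.
  - rewrite Es, edge_slope, <- Es. apply derivable_pt_lim_translate; auto.
Qed.

Hypothesis boundary_value : g 1 = f 0.
Hypothesis boundary_slope : g' 1 = f' 0.

Lemma derivable_periodize_boundary (n : Z) :
  derivable_pt_lim (periodize th f g) (IZR n) (periodize th f' g' (IZR n)).
Proof.
  pose proof (Rmin_pos_bounds th (1 - th) ltac:(lra) ltac:(lra)) as (Hd & Hd1 & Hd2).
  set (d := Rmin th (1 - th)) in *.
  assert (Hn : IZR (n - 1) = IZR n - 1) by apply minus_IZR.
  assert (E1 : IZR n - IZR (n - 1) = 1) by lra.
  assert (E0 : IZR n - IZR n = 0) by ring.
  rewrite (periodize_bonded th f' g' n) by lra.
  apply (derivable_pt_lim_two_sided _ (fun y => g (y - IZR (n - 1))) (fun y => f (y - IZR n))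
           _ _ d Hd).
  - intros y Hy. apply periodize_blister; lra.
  - intros y Hy. apply periodize_bonded; lra.
  - rewrite (periodize_bonded th f g n), E0, E1 by lra. symmetry. exact boundary_value.
  - apply periodize_bonded; lra.
  - rewrite E0, <- boundary_slope, <- E1. apply derivable_pt_lim_translate; auto.
  - apply derivable_pt_lim_translate; auto.
Qed.

Lemma derivable_periodize s :
  derivable_pt_lim (periodize th f g) s (periodize th f' g' s).
Proof.
  set (n := Int_part s). assert (Hs := Int_part_cell s). fold n in Hs.
  destruct (Rle_lt_or_eq_dec _ _ (proj1 Hs)) as [Hlt|Heq].
  - destruct (Rtotal_order s (IZR n + th)) as [H|[H|H]].
    + apply (derivable_periodize_inside n). lra.
    + rewrite H. apply derivable_periodize_edge.
    + apply (derivable_periodize_inside n). lra.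
  - rewrite <- Heq. apply derivable_periodize_boundary.
Qed.

End PeriodizeDerivative.

Definition bonded (th s : R) : Prop := frac_part s <= th.

Lemma bonded_periodic th : periodic1_set (bonded th).
Proof. intros s. unfold bonded. rewrite frac_part_periodic. tauto. Qed.

Lemma bonded_unit th s : 0 <= s < 1 -> (bonded th s <-> s <= th).
Proof.
  intros Hs. unfold bonded. rewrite (frac_part_cell 0) by (simpl; lra).
  simpl. rewrite Rminus_0_r. tauto.
Qed.

Lemma bonded_closed th : 0 <= th -> closed_set (bonded th).
Proof.
  intros Hth s Hs. unfold complementary, bonded in Hs.
  set (n := Int_part s). assert (Hc := Int_part_cell s). fold n in Hc.
  rewrite (frac_part_cell n s Hc) in Hs. apply Rnot_le_lt in Hs.
  pose proof (Rmin_pos_bounds (s - IZR n - th) (IZR n + 1 - s) ltac:(lra) ltac:(lra))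
      as (Hd & Hd1 & Hd2).
  set (d := Rmin (s - IZR n - th) (IZR n + 1 - s)) in *.
  exists (mkposreal d Hd). intros y Hy. unfold disc in Hy. simpl in Hy.
  apply Rabs_def2 in Hy. unfold complementary, bonded.
  rewrite (frac_part_cell n y) by lra. apply Rlt_not_le. lra.
Qed.

Lemma closed_set_rescale (D : R -> Prop) a :
  closed_set D -> closed_set (fun x => D (a * x)).
Proof.
  intros HD. apply (continuity_P2 (fun x => a * x) (complementary D)); auto.
  intros x. apply derivable_continuous_pt. exists a.
  apply derivable_pt_lim_eq with (a * 1); [|ring].
  apply derivable_pt_lim_scal with (f := id), derivable_pt_lim_id.
Qed.

(* The blister shape: a polynomial bump on [0,1] vanishing to third order at
   both ends, so that its value, slope and curvature all vanish there. *)
Definition bump (t : R) : R := t ^ 3 * (1 - t) ^ 3.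
Definition bump_d1 (t : R) : R := 3 * t ^ 2 * (1 - t) ^ 2 * (1 - 2 * t).
Definition bump_d2 (t : R) : R := 6 * t - 36 * t ^ 2 + 60 * t ^ 3 - 30 * t ^ 4.

Definition bump_d1_sq_prim (t : R) : R :=
  9/5 * t^5 - 12 * t^6 + 234/7 * t^7 - 99/2 * t^8 + 41 * t^9 - 18 * t^10 + 36/11 * t^11.
Definition bump_d2_sq_prim (t : R) : R :=
  12 * t^3 - 108 * t^4 + 2016/5 * t^5 - 780 * t^6 + 5760/7 * t^7 - 450 * t^8 + 100 * t^9.

Lemma bump_deriv t : derivable_pt_lim bump t (bump_d1 t).
Proof. apply is_derive_Reals. unfold bump, bump_d1. auto_derive; auto. ring. Qed.

Lemma bump_d1_deriv t : derivable_pt_lim bump_d1 t (bump_d2 t).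
Proof. apply is_derive_Reals. unfold bump_d1, bump_d2. auto_derive; auto. ring. Qed.

Lemma bump_d1_sq_prim_deriv t : derivable_pt_lim bump_d1_sq_prim t (bump_d1 t ^ 2).
Proof. apply is_derive_Reals. unfold bump_d1_sq_prim, bump_d1. auto_derive; auto. field. Qed.

Lemma bump_d2_sq_prim_deriv t : derivable_pt_lim bump_d2_sq_prim t (bump_d2 t ^ 2).
Proof. apply is_derive_Reals. unfold bump_d2_sq_prim, bump_d2. auto_derive; auto. field. Qed.

Lemma bump_d1_sq_prim_ends : bump_d1_sq_prim 0 = 0 /\ bump_d1_sq_prim 1 = 1 / 770.
Proof. unfold bump_d1_sq_prim. split; field. Qed.

Lemma bump_d2_sq_prim_ends : bump_d2_sq_prim 0 = 0 /\ bump_d2_sq_prim 1 = 2 / 35.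
Proof. unfold bump_d2_sq_prim. split; field. Qed.

Lemma bump_nonneg t : 0 <= t <= 1 -> 0 <= bump t.
Proof. intros Ht. unfold bump. apply Rmult_le_pos; apply pow_le; lra. Qed.

Section CellProfile.
Variable th : R.
Hypothesis th_range : 0 < th < 1.

Definition blister_coord (s : R) : R := (s - th) / (1 - th).

(* The amplitude is chosen so that the blister stores exactly the unit excess
   length of a period: int_th^1 (u')^2 / 2 = 1. *)
Definition amplitude : R := sqrt (1540 * (1 - th)).

(* Branches of the unit-period profile (normalised to eta = 1): on the bonded
   part [0, th] the film is flat ([u = 0]) and [w] has slope 1; on the blister
   [u] is a bump and [w' = 1 - (u')^2 / 2], so the membrane strain vanishes. *)
Definition blister_u (s : R) : R := amplitude * bump (blister_coord s).
Definition blister_u1 (s : R) : R := amplitude * bump_d1 (blister_coord s) / (1 - th).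
Definition blister_u2 (s : R) : R := amplitude * bump_d2 (blister_coord s) / (1 - th) ^ 2.
Definition bonded_w (s : R) : R := s - th / 2.
Definition blister_w (s : R) : R := s - th / 2 - 770 * bump_d1_sq_prim (blister_coord s).
Definition blister_w1 (s : R) : R := 1 - 770 * bump_d1 (blister_coord s) ^ 2 / (1 - th).

Definition prof_u : R -> R := periodize th (fun _ => 0) blister_u.
Definition prof_u1 : R -> R := periodize th (fun _ => 0) blister_u1.
Definition prof_u2 : R -> R := periodize th (fun _ => 0) blister_u2.
Definition prof_w : R -> R := periodize th bonded_w blister_w.
Definition prof_w1 : R -> R := periodize th (fun _ => 1) blister_w1.

Lemma amplitude_sq : amplitude ^ 2 = 1540 * (1 - th).
Proof. unfold amplitude. rewrite pow2_sqrt; lra. Qed.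

Lemma blister_coord_ends : blister_coord th = 0 /\ blister_coord 1 = 1.
Proof. unfold blister_coord. split; field; lra. Qed.

Lemma derivable_blister (P P' : R -> R) c d s :
  (forall t, derivable_pt_lim P t (P' t)) ->
  derivable_pt_lim (fun s => d + c * P (blister_coord s)) s
                   (c * P' (blister_coord s) / (1 - th)).
Proof.
  intros HP.
  assert (H := derivable_pt_lim_affine P P' (/ (1 - th)) (- th / (1 - th)) s HP).
  assert (E : forall y, / (1 - th) * y + - th / (1 - th) = blister_coord y)
    by (intros y; unfold blister_coord; field; lra).
  rewrite E in H.
  apply (derivable_pt_lim_scal _ c) in H.
  apply (derivable_pt_lim_plus _ _ s _ _ (derivable_pt_lim_const d s)) in H.
  unfold plus_fct, mult_real_fct in H.
  eapply derivable_pt_lim_eq.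
  - eapply derivable_pt_lim_ext; [|exact H]. intros y. cbv beta. rewrite E. reflexivity.
  - field. lra.
Qed.

Lemma blister_u_deriv s : derivable_pt_lim blister_u s (blister_u1 s).
Proof.
  eapply derivable_pt_lim_eq.
  - eapply derivable_pt_lim_ext; [|apply (derivable_blister _ _ amplitude 0 s bump_deriv)].
    intros y. unfold blister_u. ring.
  - reflexivity.
Qed.

Lemma blister_u1_deriv s : derivable_pt_lim blister_u1 s (blister_u2 s).
Proof.
  eapply derivable_pt_lim_eq.
  - eapply derivable_pt_lim_ext;
      [|apply (derivable_blister _ _ (amplitude / (1 - th)) 0 s bump_d1_deriv)].
    intros y. unfold blister_u1. field. lra.
  - unfold blister_u2. field. lra.
Qed.

Lemma blister_w_deriv s : derivable_pt_lim blister_w s (blister_w1 s).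
Proof.
  assert (H := derivable_pt_lim_plus _ _ s _ _ (derivable_pt_lim_id s)
                 (derivable_blister _ _ (-770) (- (th / 2)) s bump_d1_sq_prim_deriv)).
  eapply derivable_pt_lim_eq.
  - eapply derivable_pt_lim_ext; [|exact H]. intros y. unfold plus_fct, id, blister_w. ring.
  - unfold blister_w1. field. lra.
Qed.

(* The bump vanishes to third order at both ends, so U and U' periodize to C^1
   functions; hence U is C^2 with derivatives [prof_u1], [prof_u2]. *)
Lemma prof_u_deriv s : derivable_pt_lim prof_u s (prof_u1 s).
Proof.
  destruct blister_coord_ends as [E0 E1].
  apply derivable_periodize; auto.
  - intros; apply derivable_pt_lim_const.
  - exact blister_u_deriv.
  - unfold blister_u. rewrite E0. unfold bump. ring.
  - unfold blister_u1. rewrite E0. unfold bump_d1. field. lra.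
  - unfold blister_u. rewrite E1. unfold bump. ring.
  - unfold blister_u1. rewrite E1. unfold bump_d1. field. lra.
Qed.

Lemma prof_u1_deriv s : derivable_pt_lim prof_u1 s (prof_u2 s).
Proof.
  destruct blister_coord_ends as [E0 E1].
  apply derivable_periodize; auto.
  - intros; apply derivable_pt_lim_const.
  - exact blister_u1_deriv.
  - unfold blister_u1. rewrite E0. unfold bump_d1. field. lra.
  - unfold blister_u2. rewrite E0. unfold bump_d2. field. lra.
  - unfold blister_u1. rewrite E1. unfold bump_d1. field. lra.
  - unfold blister_u2. rewrite E1. unfold bump_d2. field. lra.
Qed.

(* Continuity of [w] at the cell boundary is where [bump_d1_sq_prim 1 = 1/770]
   (i.e. the choice of [amplitude]) enters. *)
Lemma prof_w_deriv s : derivable_pt_lim prof_w s (prof_w1 s).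
Proof.
  destruct blister_coord_ends as [E0 E1].
  destruct bump_d1_sq_prim_ends as [P0 P1].
  apply derivable_periodize; auto.
  - intros y. apply derivable_pt_lim_eq with (1 - 0).
    + apply derivable_pt_lim_minus; [apply derivable_pt_lim_id|apply derivable_pt_lim_const].
    + ring.
  - exact blister_w_deriv.
  - unfold bonded_w, blister_w. rewrite E0, P0. ring.
  - unfold blister_w1. rewrite E0. unfold bump_d1. field. lra.
  - unfold bonded_w, blister_w. rewrite E1, P1. field.
  - unfold blister_w1. rewrite E1. unfold bump_d1. field. lra.
Qed.

Lemma prof_u_nonneg s : 0 <= prof_u s.
Proof.
  unfold prof_u, periodize. destruct (base_fp s) as [F0 F1].
  destruct Rle_dec as [_|Hb]; [apply Rle_refl|apply Rnot_le_lt in Hb].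
  unfold blister_u. apply Rmult_le_pos; [apply sqrt_pos|apply bump_nonneg].
  unfold blister_coord. split.
  - apply Rdiv_le_0_compat; lra.
  - apply Rmult_le_reg_r with (1 - th); [lra|].
    unfold Rdiv. rewrite Rmult_assoc, Rinv_l by lra. lra.
Qed.

Lemma prof_u_bonded s : bonded th s -> prof_u s = 0.
Proof. unfold bonded, prof_u, periodize. destruct Rle_dec; tauto. Qed.

Lemma prof_w1_bonded s : bonded th s -> prof_w1 s = 1.
Proof. unfold bonded, prof_w1, periodize. destruct Rle_dec; tauto. Qed.

Lemma prof_membrane s : prof_w1 s + / 2 * prof_u1 s ^ 2 - 1 = 0.
Proof.
  unfold prof_w1, prof_u1, periodize. destruct Rle_dec.
  - ring.
  - unfold blister_w1, blister_u1.
    replace ((amplitude * bump_d1 (blister_coord (frac_part s)) / (1 - th)) ^ 2)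
      with (amplitude ^ 2 * bump_d1 (blister_coord (frac_part s)) ^ 2 / (1 - th) ^ 2)
      by (field; lra).
    rewrite amplitude_sq. field. lra.
Qed.

End CellProfile.

Lemma is_RInt_primitive (G g : R -> R) a b :
  (forall x, derivable_pt_lim G x (g x)) -> (forall x, continuous g x) ->
  is_RInt g a b (G b - G a).
Proof.
  intros HG Hg. apply (is_RInt_derive G g); intros x _; [apply is_derive_Reals|]; auto.
Qed.

Section CellIntegrals.
Variable th : R.
Hypothesis th_range : 0 < th < 1.

Lemma indic_bonded_unit s : 0 <= s < 1 ->
  indic (bonded th) s = if Rle_dec s th then 1 else 0.
Proof.
  intros Hs. unfold indic. assert (H := bonded_unit th s Hs).
  destruct excluded_middle_informative, Rle_dec; tauto.
Qed.

Lemma cell_bonded_length : is_RInt (indic (bonded th)) 0 1 th.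
Proof.
  replace th with ((th - 0) * 1 + (1 - th) * 0) at 2 by ring.
  apply (is_RInt_unit_split _ (fun _ => 1) (fun _ => 0) th); auto; try apply is_RInt_const_R.
  - intros s Hs. rewrite indic_bonded_unit by lra. destruct Rle_dec; [reflexivity|lra].
  - intros s Hs. rewrite indic_bonded_unit by lra. destruct Rle_dec; [lra|reflexivity].
Qed.

Lemma cell_bonded_w_sq :
  is_RInt (fun s => indic (bonded th) s * prof_w th s ^ 2) 0 1 (th ^ 3 / 12).
Proof.
  replace (th ^ 3 / 12)
    with (((th - th / 2) ^ 3 / 3 - (0 - th / 2) ^ 3 / 3) + (1 - th) * 0) by field.
  apply (is_RInt_unit_split _ (fun s => (s - th / 2) ^ 2) (fun _ => 0) th); auto.
  - intros s Hs. rewrite indic_bonded_unit by lra. unfold prof_w.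
    rewrite periodize_unit_bonded by lra. destruct Rle_dec; [|lra]. unfold bonded_w. ring.
  - intros s Hs. rewrite indic_bonded_unit by lra. destruct Rle_dec; [lra|ring].
  - apply (is_RInt_primitive (fun s => (s - th / 2) ^ 3 / 3)); intros x.
    + apply is_derive_Reals. auto_derive; auto. field.
    + refine (ex_derive_continuous _ _ _). auto_derive; auto.
  - apply is_RInt_const_R.
Qed.

Lemma cell_bending : is_RInt (fun s => prof_u2 th s ^ 2) 0 1 (88 / (1 - th) ^ 2).
Proof.
  set (c := amplitude th ^ 2 / (1 - th) ^ 3).
  set (G := fun s => 0 + c * bump_d2_sq_prim (blister_coord th s)).
  destruct (blister_coord_ends th th_range) as [E0 E1].
  destruct bump_d2_sq_prim_ends as [P0 P1].
  replace (88 / (1 - th) ^ 2) with ((th - 0) * 0 + (G 1 - G th)).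
  2: { unfold G, c. rewrite E0, E1, P0, P1, amplitude_sq by auto. field. lra. }
  apply (is_RInt_unit_split _ (fun _ => 0) (fun s => blister_u2 th s ^ 2) th); auto.
  - intros s Hs. unfold prof_u2. rewrite periodize_unit_bonded by lra. ring.
  - intros s Hs. unfold prof_u2. rewrite periodize_unit_blister by lra. reflexivity.
  - apply is_RInt_const_R.
  - apply is_RInt_primitive; intros x.
    + eapply derivable_pt_lim_eq.
      * apply (derivable_blister th th_range _ _ c 0 x bump_d2_sq_prim_deriv).
      * unfold blister_u2, c. field. lra.
    + refine (ex_derive_continuous _ _ _). unfold blister_u2, blister_coord, bump_d2.
      auto_derive. lra.
Qed.

Lemma cell_w1_sq_integrable : ex_RInt (fun s => prof_w1 th s ^ 2) 0 1.
Proof.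
  assert (Hb : ex_RInt (fun s => blister_w1 th s ^ 2) th 1).
  { apply (@ex_RInt_continuous R_CompleteNormedModule). intros z _.
    refine (ex_derive_continuous _ _ _). unfold blister_w1, blister_coord, bump_d1.
    auto_derive. lra. }
  destruct Hb as [I HI]. exists ((th - 0) * 1 + I).
  apply (is_RInt_unit_split _ (fun _ => 1) (fun s => blister_w1 th s ^ 2) th); auto.
  - intros s Hs. unfold prof_w1. rewrite periodize_unit_bonded by lra. ring.
  - intros s Hs. unfold prof_w1. rewrite periodize_unit_blister by lra. reflexivity.
  - apply is_RInt_const_R.
Qed.

End CellIntegrals.

Lemma periodic1_rescale (F : R -> R) (N : nat) c :
  periodic1 F -> periodic1 (fun x => c * F (INR N * x)).
Proof.
  intros HF x. cbv beta. rewrite Rmult_plus_distr_l, Rmult_1_r, periodic1_nat; auto.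
Qed.

Lemma indic_periodic (Om : R -> Prop) : periodic1_set Om -> periodic1 (indic Om).
Proof.
  intros HOm s. unfold indic.
  destruct (excluded_middle_informative (Om (s + 1))) as [H|H];
    destruct (excluded_middle_informative (Om s)) as [H'|H']; auto;
    exfalso; [apply H'|apply H]; apply HOm; auto.
Qed.

Lemma is_RInt_pattern (F f : R -> R) (N : nat) c I :
  periodic1 F -> is_RInt F 0 1 I -> (1 <= N)%nat ->
  (forall x, f x = c * F (INR N * x)) -> is_RInt f 0 1 (c * I).
Proof.
  intros HF HI HN Hf. apply (is_RInt_scale_R (fun x => F (INR N * x))); auto.
  apply is_RInt_periodic_rescale; auto.
Qed.

Section Pattern.
Variables (eta th : R) (N : nat).
Hypothesis eta_pos : 0 < eta.
Hypothesis th_range : 0 < th < 1.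
Hypothesis N_pos : (1 <= N)%nat.

(* [N] copies of the unit-period profile packed into T^1, scaled so that the
   bonded intervals carry the misfit strain [eta]: period [1/N], bonded
   length [th/N], [w = (eta/N) W(N x)], [u = (sqrt eta / N) U(N x)]. *)
Definition pattern_u (x : R) : R := sqrt eta / INR N * prof_u th (INR N * x).
Definition pattern_u1 (x : R) : R := sqrt eta * prof_u1 th (INR N * x).
Definition pattern_u2 (x : R) : R := sqrt eta * INR N * prof_u2 th (INR N * x).
Definition pattern_w (x : R) : R := eta / INR N * prof_w th (INR N * x).
Definition pattern_w1 (x : R) : R := eta * prof_w1 th (INR N * x).
Definition pattern_bonded (x : R) : Prop := bonded th (INR N * x).

(* Its energy: no membrane term, bending [h^3 eta N^2 88/(1-th)^2], and the
   sheath term of the bonded intervals. *)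
Definition pattern_energy (h alpha_s : R) : R :=
  h ^ 3 * (eta * INR N ^ 2 * (88 / (1 - th) ^ 2))
  + alpha_s * (sqrt (eta ^ 2 * th) * sqrt ((eta / INR N) ^ 2 * (th ^ 3 / 12))).

Lemma INR_N_pos : 1 <= INR N.
Proof. apply (le_INR 1). exact N_pos. Qed.

Lemma derivable_rescaled (F F' : R -> R) c x :
  (forall s, derivable_pt_lim F s (F' s)) ->
  derivable_pt_lim (fun x => c * F (INR N * x)) x (c * INR N * F' (INR N * x)).
Proof.
  intros HF. assert (H := derivable_pt_lim_affine F F' (INR N) 0 x HF).
  apply (derivable_pt_lim_scal _ c) in H. unfold mult_real_fct in H.
  rewrite Rplus_0_r, <- Rmult_assoc in H.
  eapply derivable_pt_lim_ext; [|exact H]. intros y. cbv beta. rewrite Rplus_0_r. reflexivity.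
Qed.

Lemma pattern_bonded_periodic : periodic1_set pattern_bonded.
Proof.
  intros x. unfold pattern_bonded, bonded. rewrite Rmult_plus_distr_l, Rmult_1_r.
  rewrite (periodic1_nat frac_part frac_part_periodic). tauto.
Qed.

Lemma pattern_admissible :
  admissible1D th pattern_w pattern_w1 pattern_u pattern_u1 pattern_u2 pattern_bonded.
Proof.
  assert (HN := INR_N_pos).
  refine (conj _ (conj _ (conj _ (conj _ (conj _
            (conj _ (conj _ (conj _ (conj _ (conj _ _)))))))))).
  - apply periodic1_rescale, periodize_periodic.
  - apply periodic1_rescale, periodize_periodic.
  - exact pattern_bonded_periodic.
  - apply closed_set_rescale, bonded_closed. lra.
  - intros x. eapply derivable_pt_lim_eq.
    + apply derivable_rescaled, prof_w_deriv; auto.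
    + unfold pattern_w1. field. lra.
  - intros x. eapply derivable_pt_lim_eq.
    + apply derivable_rescaled, prof_u_deriv; auto.
    + unfold pattern_u1. field. lra.
  - intros x. apply derivable_rescaled, prof_u1_deriv; auto.
  - destruct (cell_w1_sq_integrable th th_range) as [I HI].
    constructor. apply ex_RInt_Reals_0. exists (eta ^ 2 * I).
    apply (is_RInt_pattern (fun s => prof_w1 th s ^ 2) _ N); auto.
    + intros s. cbv beta. unfold prof_w1. rewrite periodize_periodic. reflexivity.
    + intros x. unfold pattern_w1. ring.
  - intros x. unfold pattern_u. apply Rmult_le_pos; [|apply prof_u_nonneg; auto].
    apply Rdiv_le_0_compat; [apply sqrt_pos|lra].
  - intros x Hx. unfold pattern_u. rewrite prof_u_bonded; auto. ring.
  - apply is_RInt_RInt01. rewrite <- (Rmult_1_l th).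
    apply (is_RInt_pattern (indic (bonded th)) _ N); auto.
    + apply indic_periodic, bonded_periodic.
    + apply cell_bonded_length; auto.
    + intros x. rewrite Rmult_1_l. reflexivity.
Qed.

Lemma pattern_membrane x : (pattern_w1 x + / 2 * pattern_u1 x ^ 2 - eta) ^ 2 = 0.
Proof.
  unfold pattern_w1, pattern_u1. rewrite Rpow_mult_distr, pow2_sqrt by lra.
  replace (eta * prof_w1 th (INR N * x) + / 2 * (eta * prof_u1 th (INR N * x) ^ 2) - eta)
    with (eta * (prof_w1 th (INR N * x) + / 2 * prof_u1 th (INR N * x) ^ 2 - 1)) by ring.
  rewrite prof_membrane by auto. ring.
Qed.

Lemma pattern_E1D_value alpha_m h alpha_s :
  E1D_value alpha_m h alpha_s eta pattern_w pattern_w1 pattern_u pattern_u1 pattern_u2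
    pattern_bonded (pattern_energy h alpha_s).
Proof.
  assert (HN := INR_N_pos).
  exists 0, (eta * INR N ^ 2 * (88 / (1 - th) ^ 2)), (eta ^ 2 * th),
    ((eta / INR N) ^ 2 * (th ^ 3 / 12)).
  refine (conj _ (conj _ (conj _ (conj _ _)))); [apply is_RInt_RInt01..|].
  - assert (H0 := is_RInt_const_R 0 1 0). rewrite Rmult_0_r in H0.
    eapply is_RInt_ext; [|exact H0]. intros x _. symmetry. apply pattern_membrane.
  - apply (is_RInt_pattern (fun s => prof_u2 th s ^ 2) _ N); auto.
    + intros s. cbv beta. unfold prof_u2. rewrite periodize_periodic. reflexivity.
    + apply cell_bending; auto.
    + intros x. unfold pattern_u2. rewrite !Rpow_mult_distr, pow2_sqrt by lra. ring.
  - apply (is_RInt_pattern (indic (bonded th)) _ N); auto.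
    + apply indic_periodic, bonded_periodic.
    + apply cell_bonded_length; auto.
    + intros x. unfold indic, pattern_bonded, pattern_w1.
      destruct excluded_middle_informative as [Hb|Hb].
      * rewrite prof_w1_bonded by auto. ring.
      * ring.
  - apply (is_RInt_pattern (fun s => indic (bonded th) s * prof_w th s ^ 2) _ N); auto.
    + intros s. cbv beta. rewrite indic_periodic by apply bonded_periodic.
      unfold prof_w. rewrite periodize_periodic. reflexivity.
    + apply cell_bonded_w_sq; auto.
    + intros x. change (indic pattern_bonded x) with (indic (bonded th) (INR N * x)).
      unfold pattern_w. field. lra.
  - unfold pattern_energy. ring.
Qed.

End Pattern.

Lemma Rpower_thirds x m : 0 < x -> Rpower x (INR m / 3) = Rpower x (1 / 3) ^ m.
Proof.
  intros Hx. rewrite <- Rpower_pow by (unfold Rpower; apply exp_pos).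
  rewrite Rpower_mult. f_equal. field.
Qed.

Lemma cube_root_cube x : 0 < x -> Rpower x (1 / 3) ^ 3 = x.
Proof.
  intros Hx. rewrite <- Rpower_thirds by auto.
  replace (INR 3 / 3) with 1 by (simpl; field). apply Rpower_1; auto.
Qed.

Lemma Rpower_2_3 x : 0 < x -> Rpower x (2 / 3) = Rpower x (1 / 3) ^ 2.
Proof.
  intros Hx. replace (2 / 3) with (INR 2 / 3) by (simpl; field). apply Rpower_thirds; auto.
Qed.

Lemma Rpower_4_3 x : 0 < x -> Rpower x (4 / 3) = Rpower x (1 / 3) ^ 4.
Proof.
  intros Hx. replace (4 / 3) with (INR 4 / 3) by (simpl; field). apply Rpower_thirds; auto.
Qed.

Lemma Rpower_5_3 x : 0 < x -> Rpower x (5 / 3) = Rpower x (1 / 3) ^ 5.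
Proof.
  intros Hx. replace (5 / 3) with (INR 5 / 3) by (simpl; field). apply Rpower_thirds; auto.
Qed.

Lemma integer_between X : 1 < X -> exists N : nat, (1 <= N)%nat /\ X <= INR N <= 2 * X.
Proof.
  intros HX. destruct (archimed X) as [Hup1 Hup2].
  assert (Hpos : (0 <= up X)%Z) by (apply le_IZR; lra).
  exists (Z.to_nat (up X)).
  assert (HN : INR (Z.to_nat (up X)) = IZR (up X))
    by (rewrite INR_IZR_INZ, Z2Nat.id; auto).
  split; [|lra].
  apply INR_le. rewrite HN. simpl. lra.
Qed.

(* The sheath term of [pattern_energy] equals [eta^2 th^2 / (sqrt 12 N)], so
   it is at most [eta^2 th^2 / N]. *)
Lemma sheath_term_le a b k : 0 < a -> 0 < b -> 0 < k ->
  sqrt (a ^ 2 * b) * sqrt ((a / k) ^ 2 * (b ^ 3 / 12)) <= a ^ 2 * b ^ 2 / k.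
Proof.
  intros Ha Hb Hk.
  assert (Hab : 0 <= a ^ 2 * b ^ 2 / k)
    by (apply Rdiv_le_0_compat; [apply Rmult_le_pos; apply pow_le|]; lra).
  rewrite <- sqrt_mult_alt by (apply Rmult_le_pos; [apply pow_le|]; lra).
  rewrite <- (sqrt_pow2 _ Hab). apply sqrt_le_1_alt.
  replace (a ^ 2 * b * ((a / k) ^ 2 * (b ^ 3 / 12))) with ((a ^ 2 * b ^ 2 / k) ^ 2 / 12)
    by (field; lra).
  assert (0 <= (a ^ 2 * b ^ 2 / k) ^ 2) by apply pow2_ge_0. lra.
Qed.

Lemma pattern_energy_le eta th (N : nat) h alpha_s X :
  0 < eta -> 0 < th < 1 -> 0 < h -> 0 < alpha_s -> 0 < X -> X <= INR N <= 2 * X ->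
  pattern_energy eta th N h alpha_s
    <= 352 * h ^ 3 * eta * X ^ 2 / (1 - th) ^ 2 + alpha_s * eta ^ 2 * th ^ 2 / X.
Proof.
  intros Heta Hth Hh Has HX HN. unfold pattern_energy.
  assert (Hbend : INR N ^ 2 <= 4 * X ^ 2) by nra.
  assert (Hsheath := sheath_term_le eta th (INR N) Heta (proj1 Hth) ltac:(lra)).
  assert (Hinv : eta ^ 2 * th ^ 2 / INR N <= eta ^ 2 * th ^ 2 / X).
  { unfold Rdiv. apply Rmult_le_compat_l; [apply Rmult_le_pos; apply pow_le; lra|].
    apply Rinv_le_contravar; lra. }
  assert (H1t : 0 < (1 - th) ^ 2) by (apply pow_lt; lra).
  apply Rplus_le_compat.
  - replace (352 * h ^ 3 * eta * X ^ 2 / (1 - th) ^ 2)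
      with (h ^ 3 * (eta * (4 * X ^ 2) * (88 / (1 - th) ^ 2))) by (field; lra).
    apply Rmult_le_compat_l; [apply pow_le; lra|].
    apply Rmult_le_compat_r; [apply Rdiv_le_0_compat; lra|].
    apply Rmult_le_compat_l; lra.
  - replace (alpha_s * eta ^ 2 * th ^ 2 / X) with (alpha_s * (eta ^ 2 * th ^ 2 / X))
      by (field; lra).
    apply Rmult_le_compat_l; lra.
Qed.

(* The optimal number of periods, [X ~ 1/l] with [l ~ l1 / ((1-th) th)^(2/3)]. *)
Definition optimal_cells (h alpha_s eta th : R) : R :=
  Rpower (1 - th) (2/3) * Rpower th (2/3) * Rpower eta (1/3) * Rpower alpha_s (1/3) / h.

Section OptimalPeriod.
Variables (h alpha_s eta th : R).
Hypotheses (h_pos : 0 < h) (alpha_s_pos : 0 < alpha_s) (eta_pos : 0 < eta)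
  (th_range : 0 < th < 1).

(* The smallness condition on [l1] says that more than one period fits. *)
Lemma optimal_cells_gt1 :
  h / (Rpower eta (1/3) * Rpower alpha_s (1/3))
    < 1 * Rpower (1 - th) (2/3) * Rpower th (2/3) ->
  1 < optimal_cells h alpha_s eta th.
Proof.
  intros Hl1. unfold optimal_cells.
  assert (HE : 0 < Rpower eta (1/3)) by apply exp_pos.
  assert (HA : 0 < Rpower alpha_s (1/3)) by apply exp_pos.
  set (P := Rpower (1 - th) (2/3)) in *. set (Q := Rpower th (2/3)) in *.
  set (E := Rpower eta (1/3)) in *. set (A := Rpower alpha_s (1/3)) in *.
  apply Rmult_lt_reg_r with (h / (E * A)).
  - apply Rdiv_lt_0_compat; [auto|apply Rmult_lt_0_compat; auto].
  - replace (P * Q * E * A / h * (h / (E * A))) with (1 * P * Q) by (field; lra). lra.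
Qed.

Lemma optimal_cells_balance :
  let X := optimal_cells h alpha_s eta th in
  352 * h ^ 3 * eta * X ^ 2 / (1 - th) ^ 2 + alpha_s * eta ^ 2 * th ^ 2 / X
  = 353 * Rpower th (4/3) / Rpower (1 - th) (2/3)
      * Rpower alpha_s (2/3) * Rpower eta (5/3) * h.
Proof.
  unfold optimal_cells.
  rewrite !Rpower_2_3, Rpower_4_3, Rpower_5_3 by lra.
  assert (HP := cube_root_cube (1 - th) ltac:(lra)).
  assert (HQ := cube_root_cube th ltac:(lra)).
  assert (HE := cube_root_cube eta eta_pos).
  assert (HA := cube_root_cube alpha_s alpha_s_pos).
  set (P := Rpower (1 - th) (1/3)) in *. set (Q := Rpower th (1/3)) in *.
  set (E := Rpower eta (1/3)) in *. set (A := Rpower alpha_s (1/3)) in *.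
  assert (0 < P /\ 0 < Q /\ 0 < E /\ 0 < A) as (HP0 & HQ0 & HE0 & HA0)
    by (repeat split; apply exp_pos).
  clearbody P Q E A. rewrite <- HP, <- HQ, <- HE, <- HA.
  field. lra.
Qed.

End OptimalPeriod.

Theorem theorem1 :
  exists c0 K3 : R, 0 < c0 /\ 0 < K3 /\
    forall alpha_m theta h alpha_s eta : R,
      0 < alpha_m -> 0 < theta < 1 -> 0 < h -> 0 < alpha_s -> 0 < eta ->
      h / (Rpower eta (1/3) * Rpower alpha_s (1/3))
        < c0 * Rpower (1 - theta) (2/3) * Rpower theta (2/3) ->
      E1D_inf_le alpha_m h alpha_s eta theta
        (K3 * Rpower theta (4/3) / Rpower (1 - theta) (2/3)
            * Rpower alpha_s (2/3) * Rpower eta (5/3) * h).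
Proof.
  exists 1, 353. split; [lra|]. split; [lra|].
  intros alpha_m th h alpha_s eta _ Hth Hh Has Heta Hl1 eps Heps.
  set (X := optimal_cells h alpha_s eta th).
  assert (HX : 1 < X) by (apply optimal_cells_gt1; auto).
  destruct (integer_between X HX) as (N & HN & HXN).
  exists (pattern_w eta th N), (pattern_w1 eta th N), (pattern_u eta th N),
    (pattern_u1 eta th N), (pattern_u2 eta th N), (pattern_bonded th N),
    (pattern_energy eta th N h alpha_s).
  split; [apply pattern_admissible; auto|].
  split; [apply pattern_E1D_value; auto|].
  rewrite <- (optimal_cells_balance h alpha_s eta th) by auto. fold X.
  assert (Hle := pattern_energy_le eta th N h alpha_s X Heta Hth Hh Has ltac:(lra) HXN).
  lra.
Qed.
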